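(* Let $\nu$ be an ergodic $S$-invariant probability measure on $X_\eta$ different from the Dirac measure at the all-zero sequence, and let $k\ge1$. Let $R_k$ denote the rotation $z\mapsto z+1$ on $\mathbb Z/b_k\mathbb Z$ with uniform measure. Then $(S,X_\eta,\nu)$ is not disjoint from $R_k$ (i.e. they admit a joining other than the product measure).
   Context: Let $S$ be the shift on $\{0,1\}^{\mathbb Z}$, $(Sx)(n)=x(n+1)$. Let $\mathscr{B}=\{b_1,b_2,\dots\}\subset\{2,3,\dots\}$ with $\gcd(b_i,b_j)=1$ for $i\ne j$ and $\sum_i1/b_i<\infty$. Define $\eta(n)=1$ iff $b_i\nmid n$ for all $i$ (else $0$), and let $X_\eta$ be the set of $y\in\{0,1\}^{\mathbb Z}$ all of whose finite blocks occur in $\eta$. Two measure-preserving systems are disjoint if the product measure is their only joining (invariant measure on the product with the given marginals). *)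

From HB Require Import structures.
From mathcomp Require Import all_boot all_order all_algebra.
From mathcomp Require Import all_classical all_reals all_analysis.
Set Implicit Arguments. Unset Strict Implicit. Unset Printing Implicit Defensive.
Import Order.TTheory GRing.Theory Num.Theory.
Local Open Scope classical_set_scope.
Local Open Scope ring_scope.

(** Configurations x : Z -> {0,1} (booleans, true = 1). *)
Definition bf_config := int -> bool.

(** Cylinder sets [x n = c]; they generate the product (Borel) sigma-algebra. *)
Definition bf_cylinders : set (set bf_config) :=
  [set A | exists (n : int) (c : bool), A = [set x | x n = c]].

Definition Cfg := g_sigma_algebraType bf_cylinders.

Definition bf_shift (x : Cfg) : Cfg := fun n => x (n + 1).

Definition bf_eta (b : nat -> nat) (n : int) : bool :=
  `[< forall i : nat, ~~ (b i %| `|n|%N)%N >].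

Definition bf_Xeta (b : nat -> nat) : set Cfg :=
  [set y | forall (m : int) (l : nat), exists t : int,
      forall j : nat, (j < l)%N -> y (m + j%:Z) = bf_eta b (t + j%:Z)].

(** Z/bZ (meaningful for b >= 2) with the discrete sigma-algebra. *)
Definition Zm (b : nat) : Type := 'Z_b.
HB.instance Definition _ (b : nat) := GRing.ComNzRing.copy (Zm b) 'Z_b.
HB.instance Definition _ (b : nat) := isPointed.Build (Zm b) 0%R.
HB.instance Definition _ (b : nat) := @isMeasurable.Build default_measure_display
  (Zm b) discrete_measurable (@discrete_measurable0 _)
  (@discrete_measurableC _) (@discrete_measurableU _).

Definition bf_rot (b : nat) (z : Zm b) : Zm b := (z + 1)%R.

Definition bf_unif (R : realType) (b : nat) (A : set (Zm b)) : \bar R :=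
  ((#|[set z : 'Z_b | `[< A z >]]|%:R / b%:R : R))%:E.

Section Systems.
Context {R : realType} {d1 d2 : measure_display}
  {T1 : measurableType d1} {T2 : measurableType d2}.

Definition m_invariant {d} {T : measurableType d} (mu : set T -> \bar R)
  (f : T -> T) : Prop :=
  forall A, measurable A -> mu (f @^-1` A) = mu A.

Definition m_ergodic {d} {T : measurableType d} (mu : set T -> \bar R)
  (f : T -> T) : Prop :=
  m_invariant mu f /\
  forall A, measurable A -> f @^-1` A = A -> mu A = 0%E \/ mu A = 1%E.

Definition m_joining (mu1 : set T1 -> \bar R) (f1 : T1 -> T1)
  (mu2 : set T2 -> \bar R) (f2 : T2 -> T2)
  (lam : probability (T1 * T2)%type R) : Prop :=
  [/\ forall A, measurable A -> lam (A `*` setT) = mu1 A,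
      forall B, measurable B -> lam (setT `*` B) = mu2 B &
      m_invariant lam (fun p => (f1 p.1, f2 p.2))].

Definition m_disjoint (mu1 : set T1 -> \bar R) (f1 : T1 -> T1)
  (mu2 : set T2 -> \bar R) (f2 : T2 -> T2) : Prop :=
  forall lam : probability (T1 * T2)%type R, m_joining mu1 f1 mu2 f2 lam ->
    forall C, measurable C -> lam C = (mu1 \x mu2)%E C.

End Systems.

From HB Require Import structures.
From mathcomp Require Import all_boot all_order all_algebra.
From mathcomp Require Import all_classical all_reals all_analysis.
From mathcomp Require Import zify.
Set Implicit Arguments. Unset Strict Implicit. Unset Printing Implicit Defensive.
Import Order.TTheory GRing.Theory Num.Theory numFieldNormedType.Exports.
Local Open Scope classical_set_scope.
Local Open Scope ring_scope.

(* Since [eta] vanishes on [b_k Z], every point of [X_eta] vanishes on a whole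
   residue class mod [b_k]; minus such a class, chosen measurably, gives a
   factor map [phase : X_eta -> Z/b_k] with [phase (S^b_k x) = phase x].
   Averaging over [n < b_k] the images of [nu] under
   [x |-> (S^n x, phase x + n)] gives an [S x R_k]-invariant joining. It gives
   no mass to [{x | x 0 = 1} x {0}], because [x n = 1] forces
   [phase x + n <> 0], whereas the product measure gives it
   [nu {x | x 0 = 1} / b_k > 0] as [nu] is shift invariant and not the Dirac
   mass at the zero sequence. *)

Section ZpArith.
Variables (b : nat) (b_gt1 : (1 < b)%N).

Lemma card_Zp_gt1 : #|'Z_b| = b.
Proof. by rewrite card_ord Zp_cast. Qed.

Lemma Zp_natr_eq0 (m : nat) : ((m%:R : 'Z_b) == 0) = (b %| m)%N.
Proof. by rewrite -(inj_eq val_inj) /= val_Zp_nat. Qed.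

Lemma Zp_intr_eq0 (n : int) : ((n%:~R : 'Z_b) == 0) = (b %| `|n|)%N.
Proof.
case: n => m; first by rewrite -pmulrn Zp_natr_eq0.
by rewrite NegzE mulrNz oppr_eq0 -pmulrn Zp_natr_eq0.
Qed.

Lemma natrDb_Zm (m : nat) : ((m + b)%:R : Zm b) = m%:R.
Proof. by apply: val_inj; rewrite /= !val_Zp_nat // modnDr. Qed.

Lemma val_Zp_add1 (z : 'Z_b) : val (z + 1) = ((val z).+1 %% b)%N.
Proof.
have -> : z + 1 = (val z).+1%:R by rewrite -natr1 natr_Zp.
exact: val_Zp_nat.
Qed.

End ZpArith.

Section CountableOperations.
Context {d : measure_display} {T : measurableType d}.
Implicit Type F : int -> set T.

Lemma measurable_forall_int F : (forall n, measurable (F n)) ->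
  measurable [set x | forall n, F n x].
Proof.
move=> mF; rewrite (_ : [set x | _] = \bigcap_k (F k%:Z `&` F (- k%:Z))).
  by apply: bigcapT_measurable => k; apply: measurableI.
apply/seteqP; split => x /=; first by move=> h k _; split; apply: h.
by move=> h [] k; [case: (h k I) | rewrite NegzE; case: (h k.+1 I)].
Qed.

Lemma measurable_exists_int F : (forall n, measurable (F n)) ->
  measurable [set x | exists n, F n x].
Proof.
move=> mF; rewrite (_ : [set x | _] = \bigcup_k (F k%:Z `|` F (- k%:Z))).
  by apply: bigcupT_measurable => k; apply: measurableU.
apply/seteqP; split => x /=.
  case=> [] [] k h; first by exists k => //; left.
  by exists k.+1 => //; right; rewrite -NegzE.
by case=> k _ [h|h]; [exists k%:Z | exists (- k%:Z)].
Qed.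

Lemma measurable_forall_nat (F : nat -> set T) : (forall n, measurable (F n)) ->
  measurable [set x | forall n, F n x].
Proof.
move=> mF; rewrite (_ : [set x | _] = \bigcap_k F k).
  exact: bigcapT_measurable.
by apply/seteqP; split => x /= h n //; apply: h.
Qed.

End CountableOperations.

Lemma measurable_cylinder (n : int) (c : bool) : measurable [set x : Cfg | x n = c].
Proof. by apply: sub_sigma_algebra; exists n, c. Qed.

Lemma measurable_cylinder_if (P : Prop) (n : int) (c : bool) :
  measurable [set x : Cfg | P -> x n = c].
Proof.
have [p|np] := pselect P.
  rewrite (_ : [set x | _] = [set x : Cfg | x n = c]).
    exact: measurable_cylinder.
  by apply/seteqP; split => x /=; [apply | move=> h _].
rewrite (_ : [set x | _] = setT) //.
by apply/seteqP; split => x //= _ /np.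
Qed.

Lemma measurable_Xeta (b : nat -> nat) : measurable (bf_Xeta b).
Proof.
apply: measurable_forall_int => m; apply: measurable_forall_nat => l.
apply: measurable_exists_int => t; apply: measurable_forall_nat => j.
exact: measurable_cylinder_if.
Qed.

Definition shiftn (n : nat) (x : Cfg) : Cfg := fun m => x (m + n%:Z).

Lemma shiftn0 (x : Cfg) : shiftn 0 x = x.
Proof. by apply/funext => m; rewrite /shiftn addr0. Qed.

Lemma bf_shiftE : bf_shift = shiftn 1.
Proof. by []. Qed.

Lemma shiftnD (m n : nat) (x : Cfg) : shiftn m (shiftn n x) = shiftn (m + n) x.
Proof. by apply/funext => k; rewrite /shiftn -addrA PoszD. Qed.

Lemma measurable_shiftn (n : nat) : measurable_fun setT (shiftn n).
Proof.
apply: (measurability _ (erefl : @measurable _ Cfg = <<s bf_cylinders >>)).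
move=> _ [B [m [c ->]] <-]; rewrite setTI.
exact: (measurable_cylinder (m + n%:Z) c).
Qed.

Lemma shiftn_invariant (R : realType) (nu : probability Cfg R) :
  m_invariant nu bf_shift -> forall n A, measurable A ->
  nu (shiftn n @^-1` A) = nu A.
Proof.
move=> nu_inv; elim=> [|n IH] A mA.
  by congr (nu _); apply/seteqP; split => x /=; rewrite shiftn0.
rewrite (_ : _ @^-1` _ = bf_shift @^-1` (shiftn n @^-1` A)).
  by rewrite nu_inv ?IH // -(setTI (_ @^-1` _)); apply: measurable_shiftn.
by apply/seteqP; split => x /=; rewrite bf_shiftE shiftnD addn1.
Qed.

Definition vanishes_on (b : nat) (x : Cfg) (r : 'Z_b) : bool :=
  `[< forall n : int, n%:~R = r -> x n = false >].

Definition vanishing_classes (b : nat) (x : Cfg) : {ffun 'Z_b -> bool} :=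
  [ffun r => vanishes_on x r].

(* The opposite of some residue class on which [x] vanishes (junk value 0 if
   there is none), so that [phase b x + n] is never 0 when [x n = 1]. *)
Definition phase_of_classes (b : nat) (u : {ffun 'Z_b -> bool}) : 'Z_b :=
  if [pick r | u r] is Some r then - r else 0.

Definition phase (b : nat) (x : Cfg) : 'Z_b :=
  phase_of_classes (vanishing_classes b x).

Lemma measurable_vanishes_on (b : nat) (r : 'Z_b) :
  measurable [set x : Cfg | vanishes_on x r].
Proof.
rewrite (_ : [set x | _] = [set x | forall n : int,
   [set x : Cfg | (n%:~R : 'Z_b) = r -> x n = false] x]).
  by apply: measurable_forall_int => n; apply: measurable_cylinder_if.
by apply/seteqP; split => x /=; rewrite /vanishes_on asboolE.
Qed.

Lemma measurable_phase (b : nat) (B : set 'Z_b) : measurable (phase b @^-1` B).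
Proof.
rewrite (_ : _ @^-1` _ = \bigcup_(u in [set u | B (phase_of_classes u)])
   \bigcap_(r in [set: 'Z_b]) [set x : Cfg | vanishes_on x r = u r]).
  apply: fin_bigcup_measurable; first exact: finite_finset.
  move=> u _; apply: fin_bigcap_measurable; first exact: finite_finset.
  move=> r _; case: (u r); first exact: measurable_vanishes_on.
  rewrite (_ : [set x | _] = ~` [set x | vanishes_on x r]).
    by apply: measurableC; apply: measurable_vanishes_on.
  by apply/seteqP; split => x /=; case: (vanishes_on x r).
apply/seteqP; split => x /=.
  by move=> Bx; exists (vanishing_classes b x) => // r _; rewrite ffunE.
case=> u /= Bu xu; suff e : vanishing_classes b x = u by rewrite /phase e.
by apply/ffunP => r; rewrite ffunE; apply: xu.
Qed.

Lemma phase_shiftn_period (b : nat) (x : Cfg) : (1 < b)%N ->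
  phase b (shiftn b x) = phase b x.
Proof.
move=> b_gt1; congr phase_of_classes; apply/ffunP => r; rewrite !ffunE.
apply/asboolP/asboolP => h n hn.
  have := h (n - b%:Z); rewrite /shiftn subrK; apply.
  by rewrite intrB -pmulrn pchar_Zp // subr0.
by have := h (n + b%:Z); apply; rewrite intrD -pmulrn pchar_Zp // addr0.
Qed.

Lemma phase_addn_neq0 (b : nat) (x : Cfg) (n : nat) :
  (exists r : 'Z_b, vanishes_on x r) -> x n%:Z -> phase b x + n%:R != 0.
Proof.
move=> [r xr] xn; rewrite /phase /phase_of_classes; case: pickP => [r' | none].
  rewrite ffunE addrC subr_eq0 => /asboolP xr'; apply/eqP => nr'.
  by move: xn; rewrite (xr' n) // -nr' pmulrn.
by have := none r; rewrite ffunE xr.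
Qed.

Lemma Xeta_vanishes_on (b : nat -> nat) (k : nat) (x : Cfg) : (1 < b k)%N ->
  bf_Xeta b x -> exists r : 'Z_(b k), vanishes_on x r.
Proof.
move=> b_gt1 Xx; apply: contrapT => none.
have hit r : exists n : int, ((n%:~R : 'Z_(b k)) = r) /\ x n = true.
  apply: contrapT => nhit; apply: none; exists r; apply/asboolP => n hr.
  by apply/negbTE/negP => xn; apply: nhit; exists n.
have [nr hnr] := choice hit.
pose N := (\max_(r : 'Z_(b k)) `|nr r|)%N.
have nrN r : (`|nr r| <= N)%N by apply: (leq_bigmax r).
have [t ht] := Xx (- N%:Z) (2 * N).+1.
pose r0 : 'Z_(b k) := (- N%:Z - t)%:~R.
have [e0 x0] := hnr r0; have := nrN r0.
move: e0 x0; set n0 := nr r0 => e0 x0 n0N.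
pose j : nat := absz (n0 + N%:Z).
have jN : (j < (2 * N).+1)%N by rewrite /j; lia.
have := ht j jN.
rewrite (_ : (- N%:Z + j%:Z = n0 :> int)%R); last by rewrite /j; lia.
rewrite x0 /bf_eta; case: asboolP => // eta_j _.
have := eta_j k; apply/negP/negPn; rewrite -Zp_intr_eq0 //.
rewrite (_ : (t + j%:Z = n0 - (- N%:Z - t) :> int)%R); last by rewrite /j; lia.
by rewrite intrB e0 subrr.
Qed.

Lemma measure_phase_sum (R : realType) (b : nat) (nu : probability Cfg R)
    (B : set 'Z_b) :
  nu (phase b @^-1` B) =
  \sum_(w : 'Z_b) (if `[< B w >] then nu (phase b @^-1` [set w]) else 0%E).
Proof.
pose F (w : 'Z_b) := if `[< B w >] then phase b @^-1` [set w] else set0.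
have -> : phase b @^-1` B = \bigcup_(w in [set: 'Z_b]) F w.
  apply/seteqP; split => x /=.
    by move=> Bx; exists (phase b x) => //; rewrite /F; case: asboolP.
  by case=> w _; rewrite /F; case: asboolP => // Bw /= ->.
rewrite measure_fin_bigcup //.
- rewrite (@fsbigE _ _ _ _ _ (enum 'Z_b)) ?enum_uniq //.
  + rewrite (eq_bigl xpredT); last by move=> i; rewrite in_setT.
    rewrite big_enum /=; apply: eq_bigr => w _; rewrite /F.
    by case: asboolP => //; rewrite measure0.
  + by move=> i _ /negP[]; rewrite mem_enum.
  + exact: (@finite_finset 'Z_b setT).
- apply/trivIsetP => i j _ _ ij; rewrite /F.
  case: asboolP => _; last by rewrite set0I.
  case: asboolP => _; last by rewrite setI0.
  by apply/seteqP; split => x //= [-> ji]; move/eqP: ij.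
- by move=> w _; rewrite /F; case: asboolP => _ //; apply: measurable_phase.
Qed.

Definition graph_pair (b n : nat) (x : Cfg) : (Cfg * Zm b)%type :=
  (shiftn n x, phase b x + n%:R).

Lemma measurable_graph_pair (b n : nat) (C : set (Cfg * Zm b)%type) :
  measurable C -> measurable (graph_pair b n @^-1` C).
Proof.
move=> mC; rewrite -(setTI (_ @^-1` _)); apply: measurable_fun_pair => //.
  exact: measurable_shiftn.
move=> _ B _; rewrite setTI.
have := @measurable_phase b [set w : 'Z_b | B (w + n%:R)].
by congr (measurable _).
Qed.

Section GraphJoining.
Variables (R : realType) (b : nat) (nu : probability Cfg R).

Definition graph_joining (C : set (Cfg * Zm b)%type) : \bar R :=
  \sum_(z : 'Z_b) ((b%:R^-1)%:E * nu (graph_pair b (val z) @^-1` C))%E.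

Let graph_joining0 : graph_joining set0 = 0%E.
Proof.
by rewrite /graph_joining big1 // => z _; rewrite preimage_set0 measure0 mule0.
Qed.

Let graph_joining_ge0 C : (0 <= graph_joining C)%E.
Proof.
apply: sume_ge0 => z _; apply: mule_ge0 => //; rewrite lee_fin invr_ge0.
Qed.

Let graph_joining_sigma_additive : semi_sigma_additive graph_joining.
Proof.
move=> F mF tF mUF; rewrite [X in _ --> X](_ : _ =
    lim ((fun n => \sum_(0 <= i < n) graph_joining (F i)) @ \oo)).
  by apply: is_cvg_ereal_nneg_natsum => k _; exact: graph_joining_ge0.
rewrite nneseries_sum; last first.
  by move=> z j _; apply: mule_ge0 => //; rewrite lee_fin invr_ge0.
apply: eq_bigr => /= z _; rewrite nneseriesZl //; congr (_ * _)%E.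
rewrite preimage_bigcup measure_semi_bigcup //.
- by move=> i; apply: measurable_graph_pair.
- apply/trivIsetP => /= i j _ _ ij; rewrite -preimage_setI.
  by move/trivIsetP : tF => /(_ _ _ _ _ ij) ->//; rewrite preimage_set0.
- by rewrite -preimage_bigcup; apply: measurable_graph_pair.
Qed.

HB.instance Definition _ := isMeasure.Build _ _ _ graph_joining
  graph_joining0 graph_joining_ge0 graph_joining_sigma_additive.

Hypotheses (b_gt1 : (1 < b)%N) (nu_inv : m_invariant nu bf_shift).

Let sum_inv_b : (\sum_(z : 'Z_b) (b%:R^-1)%:E = 1 :> \bar R)%E.
Proof.
rewrite sumEFin sumr_const card_Zp_gt1 // -(mulr_natr (b%:R^-1)) mulVf //.
by rewrite pnatr_eq0 -lt0n ltnW.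
Qed.

Lemma graph_joining_fst A : measurable A -> graph_joining (A `*` setT) = nu A.
Proof.
move=> mA; transitivity (\sum_(z : 'Z_b) ((b%:R^-1)%:E * nu A))%E.
  apply: eq_bigr => z _; congr (_ * _)%E.
  rewrite -(shiftn_invariant nu_inv (val z) mA); congr (nu _).
  by apply/seteqP; split => x /=; [case | move=> h; split].
by rewrite -ge0_sume_distrl ?sum_inv_b ?mul1e // => z _; rewrite lee_fin invr_ge0.
Qed.

Let graph_joining_setT : graph_joining setT = 1%E.
Proof. by rewrite -setXTT graph_joining_fst // probability_setT. Qed.

HB.instance Definition _ :=
  Measure_isProbability.Build _ _ _ graph_joining graph_joining_setT.

Lemma graph_joining_snd (B : set (Zm b)) : graph_joining (setT `*` B) = bf_unif R B.
Proof.
pose p (w : 'Z_b) := nu (phase b @^-1` [set w]).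
transitivity ((b%:R^-1)%:E *
  \sum_(z : 'Z_b) \sum_(w : 'Z_b) (if `[< B (w + z)%R >] then p w else 0%E))%E.
  rewrite ge0_sume_distrr; last by move=> z _; apply: sume_ge0 => w _; case: ifP.
  apply: eq_bigr => z _; congr (_ * _)%E.
  rewrite -(measure_phase_sum nu [set w | B (w + z)]); congr (nu _).
  by apply/seteqP; split => x /=; [case=> _ | move=> h; split => //];
    rewrite /graph_pair /= natr_Zp.
transitivity ((b%:R^-1 : R)%:E *
  \sum_(z : 'Z_b) (if `[< B z >] then 1%E else 0%E))%E.
  rewrite exchange_big /=; congr (_ * _)%E.
  transitivity (\sum_(w : 'Z_b) \sum_(z : 'Z_b) (if `[< B z >] then p w else 0%E)).
    by apply: eq_bigr => w _; rewrite [RHS](reindex_inj (addrI w)).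
  rewrite exchange_big /=; apply: eq_bigr => z _.
  case: ifP => _; last by rewrite big1.
  have := measure_phase_sum nu [set: 'Z_b].
  rewrite preimage_setT probability_setT => ->.
  by apply: eq_bigr => w _; rewrite asboolT.
rewrite /bf_unif -big_mkcond /= sumEFin -EFinM sumr_const mulrC.
congr (_%:E); congr (_ * _); congr (_%:R).
by apply: eq_card => z; rewrite !unfold_in /in_set /= asboolb.
Qed.

Lemma measure_graph_pair_modn (C : set (Cfg * Zm b)%type) n : measurable C ->
  nu (graph_pair b n @^-1` C) = nu (graph_pair b (n %% b) @^-1` C).
Proof.
move=> mC; rewrite {1}(divn_eq n b); elim: (n %/ b)%N => [|q IH].
  by rewrite mul0n add0n.
rewrite mulSn -addnA [(b + _)%N]addnC -IH.
rewrite -[RHS](shiftn_invariant nu_inv b (measurable_graph_pair _ mC)).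
congr (nu _); apply/seteqP; split => x /=;
  by rewrite /graph_pair shiftnD phase_shiftn_period // natrDb_Zm.
Qed.

Lemma graph_joining_invariant (C : set (Cfg * Zm b)%type) : measurable C ->
  graph_joining ((fun p => (bf_shift p.1, bf_rot p.2)) @^-1` C) = graph_joining C.
Proof.
move=> mC; rewrite /graph_joining [RHS](reindex_inj (addIr 1)).
apply: eq_bigr => z _; congr (_ * _)%E.
rewrite val_Zp_add1 // -measure_graph_pair_modn //; congr (nu _).
apply/seteqP; split => x /=;
  by rewrite /graph_pair /bf_rot /= bf_shiftE shiftnD -addrA natr1.
Qed.

Lemma graph_joining_is_joining :
  m_joining nu bf_shift (@bf_unif R b) (@bf_rot b) graph_joining.
Proof.
split; [exact: graph_joining_fst | move=> B _; exact: graph_joining_snd |].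
exact: graph_joining_invariant.
Qed.

End GraphJoining.

Lemma graph_joining_diagonal_null (R : realType) (b : nat) (nu : probability Cfg R)
    (X : set Cfg) :
  measurable X -> nu X = 1%E ->
  (forall x, X x -> exists r : 'Z_b, vanishes_on x r) ->
  @graph_joining R b nu ([set x : Cfg | x 0 = true] `*` [set 0]) = 0%E.
Proof.
move=> mX nuX X_vanish; rewrite /graph_joining big1 // => z _.
suff -> : nu (graph_pair b (val z) @^-1` ([set x | x 0 = true] `*` [set 0])) = 0%E.
  by rewrite mule0.
have nuCX : nu (~` X) = 0%E by rewrite probability_setC // nuX subee.
apply/eqP; rewrite -measure_le0 -nuCX; apply: le_measure; rewrite ?inE.
- apply: measurable_graph_pair; apply: measurableX => //; exact: measurable_cylinder.
- exact: measurableC.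
move=> x [/= xz phase0] Xx; move: phase0; apply/eqP.
by apply: phase_addn_neq0 (X_vanish x Xx) _; rewrite /shiftn add0r in xz.
Qed.

Lemma bf_unif_set1 (R : realType) (b : nat) (z : Zm b) :
  bf_unif R [set z] = (b%:R^-1)%:E.
Proof.
rewrite /bf_unif (_ : #|_| = 1%N) ?mul1r // -(card1 z); apply: eq_card => w.
by rewrite !unfold_in /in_set /= asboolb; apply/asboolP/eqP.
Qed.

Lemma bf_unif_set0 (R : realType) (b : nat) : bf_unif R (set0 : set (Zm b)) = 0%E.
Proof.
rewrite /bf_unif (_ : #|_| = 0%N) ?mul0r //; apply: eq_card0 => w.
by rewrite !unfold_in /in_set /= asboolb asboolF.
Qed.

Lemma product_bf_unif_setX1 (d : measure_display) (T : measurableType d)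
    (R : realType) (mu : measure T R) (b : nat) (A : set T) (z : Zm b) :
  measurable A -> (mu \x @bf_unif R b)%E (A `*` [set z]) = ((b%:R^-1)%:E * mu A)%E.
Proof.
move=> mA; rewrite /product_measure1 -integral_cst //.
rewrite (_ : @bf_unif R b \o xsection _ = (cst (b%:R^-1)%:E) \_ A).
  by rewrite -integral_mkcond.
apply/funext => x; rewrite patchE /=; have [Ax|nAx] := pselect (A x).
  rewrite mem_set // (_ : xsection _ x = [set z]) ?bf_unif_set1 //.
  apply/seteqP; split => w /=; rewrite /xsection /=; first by case/set_mem.
  by move=> ->; apply/mem_set.
rewrite memNset // (_ : xsection _ x = set0) ?bf_unif_set0 //.
by apply/seteqP; split => w //=; rewrite /xsection /= => /set_mem[].
Qed.

Lemma probability_eq_dirac (d : measure_display) (T : measurableType d)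
    (R : realType) (P : probability T R) (a : T) :
  P.-negligible (~` [set a]) -> forall A, measurable A -> P A = \d_a A.
Proof.
move=> [N [mN PN0 aN]] A mA; rewrite diracE.
have P_null B : B `<=` ~` [set a] -> measurable B -> P B = 0%E.
  move=> Ba mB; apply/eqP; rewrite eq_le measure_ge0 andbT -PN0.
  by rewrite le_measure ?inE // => x /Ba /aN.
have [Aa|nAa] := pselect (A a); last first.
  by rewrite memNset // P_null // => x Ax /= xa; subst.
rewrite mem_set // -[A]setCK probability_setC; last exact: measurableC.
by rewrite P_null ?sube0 //; [move=> x /= nAx xa; subst | exact: measurableC].
Qed.

Section ShiftInvariantMeasure.
Variables (R : realType) (nu : probability Cfg R).
Hypothesis nu_inv : m_invariant nu bf_shift.

Lemma measure_cylinder_shift (n : int) (c : bool) :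
  nu [set x : Cfg | x n = c] = nu [set x : Cfg | x 0 = c].
Proof.
case: n => [m|m].
  rewrite -(shiftn_invariant nu_inv m (measurable_cylinder 0 c)).
  by congr (nu _); apply/funext => x; rewrite /shiftn /= add0r.
rewrite -(shiftn_invariant nu_inv m.+1 (measurable_cylinder (Negz m) c)).
by congr (nu _); apply/funext => x; rewrite /shiftn /= NegzE addNr.
Qed.

Lemma measure_cylinder0_gt0 :
  (exists A, measurable A /\ nu A <> @dirac _ Cfg (fun _ => false) R A) ->
  (0 < nu [set x : Cfg | x 0%R = true])%E.
Proof.
move=> [A [mA nuA]]; rewrite lt0e measure_ge0 andbT; apply/eqP => nu0.
apply/nuA/probability_eq_dirac => //.
pose F k := [set x : Cfg | x k%:Z = true] `|` [set x : Cfg | x (- k%:Z) = true].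
apply: (@negligibleS _ _ _ _ (\bigcup_k F k)).
  move=> x /= x_neq0; have [n xn] : exists n, x n = true.
    apply: contrapT => none; apply: x_neq0; apply/funext => n.
    by apply/negbTE/negP => xn; apply: none; exists n.
  case: n xn => [k|k] xn; first by exists k => //; left.
  by exists k.+1 => //; right; rewrite -NegzE.
have null_cylinder n : nu.-negligible [set x : Cfg | x n = true].
  exists [set x : Cfg | x n = true]; split => //; first exact: measurable_cylinder.
  by rewrite measure_cylinder_shift.
by apply: negligible_bigcup => k; apply: negligibleU.
Qed.

End ShiftInvariantMeasure.

Theorem mainTheorem9 (R : realType) (b : nat -> nat)
  (hb2 : forall i, (2 <= b i)%N)
  (hcop : forall i j, i <> j -> coprime (b i) (b j))
  (hsum : cvgn (series (fun i => ((b i)%:R^-1 : R))))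
  (nu : probability Cfg R)
  (hsupp : nu (bf_Xeta b) = 1%E)
  (herg : m_ergodic nu bf_shift)
  (hdirac : exists A : set Cfg, measurable A /\
              nu A <> @dirac _ Cfg (fun _ : int => false) R A)
  (k : nat) :
  ~ m_disjoint nu bf_shift (@bf_unif R (b k)) (@bf_rot (b k)).
Proof.
have b_gt1 : (1 < b k)%N := hb2 k.
have nu_inv := herg.1.
move=> /(_ _ (graph_joining_is_joining b_gt1 nu_inv)) disj.
have mC : measurable ([set x : Cfg | x 0 = true] `*` [set 0 : Zm (b k)]).
  by apply: measurableX => //; apply: measurable_cylinder.
have := disj _ mC; rewrite product_bf_unif_setX1; last exact: measurable_cylinder.
rewrite /= (graph_joining_diagonal_null (measurable_Xeta b) hsupp); last first.
  by move=> x; apply: Xeta_vanishes_on.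
move/esym/eqP; apply/negP; rewrite gt_eqF // mule_gt0 ?measure_cylinder0_gt0 //.
by rewrite lte_fin invr_gt0 ltr0n ltnW.
Qed.
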